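(* Let $X>0$ and let $w:[0,X]\to\mathbb{R}$ be a smooth function with $w''(x)\ge w(x)$ and $w(x)\ge0$ for all $x\in[0,X]$, and $w'(0)\ge0$. Then for all $x,y\ge0$ with $x+y\le X$, $w(x+y)\ge w(x)\cosh(y)$. *)

From Stdlib Require Import Reals.
From Coquelicot Require Import Coquelicot.
Open Scope R_scope.

Definition smooth (w : R -> R) : Prop := forall (n : nat) (x : R), ex_derive_n w n x.

(** Since w'' >= w >= 0, w' is nondecreasing, so w' >= w'(0) >= 0.  Hence
    (w' + w)' = w'' + w' >= w' + w, so e^(-s) (w' + w)(s) is nondecreasing and
    w'(s) + w(s) >= e^(s-x) w(x) for s >= x.  This says (e^s w(s))' >= w(x) e^(2s-x),
    and integrating from x to x + y gives
    e^(x+y) w(x+y) - e^x w(x) >= w(x) (e^(x+2y) - e^x) / 2,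
    which is e^(x+y) (w(x+y) - w(x) cosh y) >= 0. *)

From Stdlib Require Import Reals Lra.
From Coquelicot Require Import Coquelicot.
Open Scope R_scope.

Lemma nondecreasing_of_derive_nonneg (f df : R -> R) (a b : R) :
  a <= b ->
  (forall t, is_derive f t (df t)) ->
  (forall t, a <= t <= b -> 0 <= df t) ->
  f a <= f b.
Proof.
  intros Hab Hf Hdf.
  destruct (MVT_gen f a b df) as [c [Hc Hmvt]].
  - intros t _; apply Hf.
  - intros t _; apply continuity_pt_filterlim.
    apply (ex_derive_continuous f); eexists; apply Hf.
  - rewrite Rmin_left, Rmax_right in Hc by lra.
    specialize (Hdf c Hc); nra.
Qed.

(* Comparison with the solution of y' = y: e^(-t) f(t) is nondecreasing. *)
Lemma exp_growth_of_derive_ge (f df : R -> R) (a b : R) :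
  a <= b ->
  (forall t, is_derive f t (df t)) ->
  (forall t, a <= t <= b -> f t <= df t) ->
  f a * exp (b - a) <= f b.
Proof.
  intros Hab Hf Hdf.
  assert (Hmono : exp (- a) * f a <= exp (- b) * f b).
  { apply (nondecreasing_of_derive_nonneg (fun t => exp (- t) * f t)
             (fun t => exp (- t) * (df t - f t))); [lra | |].
    - intro t; auto_derive; [eexists; apply Hf |].
      replace (Derive (fun x => f x) t) with (df t)
        by (symmetry; apply is_derive_unique, Hf).
      ring.
    - intros t Ht; specialize (Hdf t Ht).
      pose proof (exp_pos (- t)); nra. }
  pose proof (exp_pos b).
  replace (exp (b - a)) with (exp b * exp (- a)) by (rewrite <- exp_plus; f_equal; ring).
  replace (f b) with (exp b * (exp (- b) * f b))
    by (rewrite <- Rmult_assoc, <- exp_plus, Rplus_opp_r, exp_0; ring).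
  nra.
Qed.

Section Supersolution.

Variables (X : R) (w : R -> R).
Hypothesis w_smooth : smooth w.
Hypothesis w''_ge_w : forall x, 0 <= x <= X -> Derive_n w 2 x >= w x.
Hypothesis w_nonneg : forall x, 0 <= x <= X -> w x >= 0.
Hypothesis w'0_nonneg : Derive w 0 >= 0.

Let is_derive_w t : is_derive w t (Derive w t).
Proof. apply Derive_correct, (w_smooth 1%nat). Qed.

Let is_derive_Derive_w t : is_derive (Derive w) t (Derive_n w 2 t).
Proof. apply Derive_correct, (w_smooth 2%nat). Qed.

Lemma Derive_w_nonneg t : 0 <= t <= X -> 0 <= Derive w t.
Proof.
  intros Ht.
  enough (Derive w 0 <= Derive w t) by lra.
  apply (nondecreasing_of_derive_nonneg (Derive w) (Derive_n w 2) 0 t);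
    [lra | exact is_derive_Derive_w |].
  intros u Hu.
  specialize (w''_ge_w u ltac:(lra)); specialize (w_nonneg u ltac:(lra)); lra.
Qed.

Lemma Derive_w_add_w_ge x s :
  0 <= x <= s -> s <= X -> w x * exp (s - x) <= Derive w s + w s.
Proof.
  intros Hxs HsX.
  assert (Hgrowth : (Derive w x + w x) * exp (s - x) <= Derive w s + w s).
  { apply (exp_growth_of_derive_ge (fun t => Derive w t + w t)
             (fun t => Derive_n w 2 t + Derive w t)); [lra | |].
    - intro t; apply (is_derive_plus (Derive w) w);
        [apply is_derive_Derive_w | apply is_derive_w].
    - intros t Ht; specialize (w''_ge_w t ltac:(lra)); lra. }
  pose proof (Derive_w_nonneg x ltac:(lra)); pose proof (exp_pos (s - x)); nra.
Qed.

Lemma supersolution_ge_cosh x y :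
  0 <= x -> 0 <= y -> x + y <= X -> w x * cosh y <= w (x + y).
Proof.
  intros Hx Hy HX.
  (* e^s w(s) - w(x) (e^(2s-x) + e^x) / 2 vanishes at s = x and is nondecreasing. *)
  set (g := fun s => exp s * w s - w x * (exp (2 * s - x) + exp x) / 2).
  assert (Hg : g x <= g (x + y)).
  { apply (nondecreasing_of_derive_nonneg g
             (fun s => exp s * (Derive w s + w s - w x * exp (s - x)))); [lra | |].
    - intro t; unfold g; auto_derive; [eexists; apply is_derive_w |].
      replace (Derive (fun x => w x) t) with (Derive w t)
        by (symmetry; apply is_derive_unique, is_derive_w).
      replace (exp (2 * t + - x)) with (exp t * exp (t - x))
        by (rewrite <- exp_plus; f_equal; ring).
      field.
    - intros t Ht; pose proof (Derive_w_add_w_ge x t ltac:(lra) ltac:(lra)).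
      pose proof (exp_pos t); nra. }
  unfold g in Hg.
  replace (2 * x - x) with x in Hg by ring.
  replace (exp (2 * (x + y) - x)) with (exp (x + y) * exp y) in Hg
    by (rewrite <- exp_plus; f_equal; ring).
  replace (exp x) with (exp (x + y) * exp (- y)) in Hg
    by (rewrite <- exp_plus; f_equal; ring).
  pose proof (exp_pos (x + y)); unfold cosh; nra.
Qed.

End Supersolution.

Theorem lemma5p3 (X : R) (w : R -> R) :
  0 < X ->
  smooth w ->
  (forall x, 0 <= x <= X -> Derive_n w 2 x >= w x) ->
  (forall x, 0 <= x <= X -> w x >= 0) ->
  Derive w 0 >= 0 ->
  forall x y, 0 <= x -> 0 <= y -> x + y <= X -> w (x + y) >= w x * cosh y.
Proof.
  intros _ Hs H2 H0 Hd0 x y Hx Hy Hxy.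
  apply Rle_ge, (supersolution_ge_cosh X w Hs H2 H0 Hd0 x y Hx Hy Hxy).
Qed.
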